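(* Let $G=(V,E)$ be a finite graph without loops and $e=uv\in E$. Let $G/e$ denote the contraction of $e$: the vertices $u$ and $v$ are replaced by a single new vertex $w$, and the edges incident to $w$ are exactly the edges other than $e$ that were incident with $u$ or $v$ (so $G/e$ has one edge fewer than $G$). Then $$\gamma_{coe}(G)-2\leq \gamma_{coe}(G/e)\leq \gamma_{coe}(G).$$
   Context: Graphs have no loops. For a graph $G=(V,E)$ and $x\in V$, $\deg(x)$ is the number of edges incident to $x$. A set $D\subseteq V$ is a dominating set if every vertex of $V\setminus D$ is adjacent to at least one vertex of $D$. A dominating set $D$ is a co-even dominating set if $\deg(x)$ is even for every $x\in V\setminus D$ (degrees taken in the graph under consideration). The co-even domination number $\gamma_{coe}(G)$ is the minimum cardinality of a co-even dominating set of $G$. *)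

From mathcomp Require Import all_boot.
Set Implicit Arguments. Unset Strict Implicit. Unset Printing Implicit Defensive.

(* A finite loopless multigraph on the vertex type T is given by its edge
   multiplicity function m : T -> T -> nat (m x y = number of edges between
   x and y), symmetric and zero on the diagonal. *)
Definition loopless_multigraph (T : finType) (m : T -> T -> nat) : Prop :=
  (forall x y, m x y = m y x) /\ (forall x, m x x = 0).

Definition deg (T : finType) (m : T -> T -> nat) (x : T) : nat :=
  \sum_(y : T) m x y.

Definition adjacent (T : finType) (m : T -> T -> nat) (x y : T) : bool :=
  0 < m x y.

Definition co_even_dominating (T : finType) (m : T -> T -> nat) (D : {set T}) : bool :=
  [forall x, (x \notin D) ==> ([exists y in D, adjacent m x y] && ~~ odd (deg m x))].

(* minimum cardinality of a co-even dominating set (V itself is one, so the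
   minimum is over a nonempty family and #|T| is a valid initial bound) *)
Definition gamma_coe (T : finType) (m : T -> T -> nat) : nat :=
  \big[minn/#|T|]_(D : {set T} | co_even_dominating m D) #|D|.

(* Contraction of the edge uv: vertex v is deleted and u plays the role of the
   new vertex w. *)
Definition contract (T : finType) (m : T -> T -> nat) (u v : T)
  (x y : {x : T | x != v}) : nat :=
  if val x == val y then 0 else
  m (val x) (val y)
  + (if val x == u then m v (val y) else 0)
  + (if val y == u then m (val x) v else 0).
Arguments contract {T} m u v x y.

From mathcomp Require Import all_boot.
From mathcomp Require Import zify.
Set Implicit Arguments. Unset Strict Implicit. Unset Printing Implicit Defensive.

(* Let [merge : V -> V(G/e)] send v to the contracted vertex w (represented by
   u) and fix every other vertex.  For x <> w, deg_(G/e) x = deg_G x, while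
   deg_(G/e) w = deg u + deg v - 2; and every edge xy of G other than e gives
   an edge between merge x and merge y.  Hence the image of a co-even
   dominating set D of G is co-even dominating in G/e: if w is outside it, so
   are u and v, whose degrees are even.  Conversely, a co-even dominating set
   D' of G/e lifts to D' + {u, v} in G, since an edge from x to w in G/e comes
   from an edge from x to u or to v. *)

Lemma gamma_coe_le (T : finType) (m : T -> T -> nat) (D : {set T}) :
  co_even_dominating m D -> gamma_coe m <= #|D|.
Proof.
move=> coeD; rewrite /gamma_coe.
have: D \in index_enum {set T} by rewrite mem_index_enum.
elim: (index_enum _) => [|E r IHr] //=; rewrite big_cons in_cons.
case/orP=> [/eqP <-|Dr]; first by rewrite coeD geq_minl.
by case: ifP => _; rewrite ?geq_min IHr ?orbT.
Qed.

Lemma gamma_coe_attained (T : finType) (m : T -> T -> nat) :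
  exists2 D : {set T}, co_even_dominating m D & #|D| = gamma_coe m.
Proof.
apply: (big_ind (fun n => exists2 D, co_even_dominating m D & #|D| = n)).
- by exists setT; [apply/forallP => x; rewrite in_setT | rewrite cardsT].
- by move=> a b [Da coeDa <-] [Db coeDb <-]; rewrite /minn; case: ltnP;
    [exists Da | exists Db].
- by move=> D coeD; exists D.
Qed.

Section Contraction.

Variables (T : finType) (m : T -> T -> nat).
Hypothesis loopless_m : loopless_multigraph m.
Variables u v : T.
Hypothesis m_uv : m u v = 1.

Local Notation V' := {x : T | x != v}.
Local Notation mc := (contract m u v).

Let m_sym x y : m x y = m y x. Proof. by case: loopless_m. Qed.
Let m_xx x : m x x = 0. Proof. by case: loopless_m. Qed.

Let u_neq_v : u != v.
Proof. by apply: contra_eq_neq m_uv => ->; rewrite m_xx. Qed.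

Lemma deg_contract (x : V') :
  deg mc x = \sum_(y | y != v)
    (if val x == y then 0 else
     m (val x) y + (if val x == u then m v y else 0)
     + (if y == u then m (val x) v else 0)).
Proof. by rewrite /deg (big_sub [pred y | y != v]). Qed.

Lemma deg_contract_other (x : V') :
  val x != u -> deg mc x = deg m (val x).
Proof.
move=> xu; rewrite deg_contract /deg [RHS](bigD1 v) //= (negPf xu).
rewrite (bigD1 u) //= (negPf xu) eqxx addn0.
rewrite [in RHS](bigD1 u) //= addnCA addnA; congr (_ + _).
apply: eq_bigr => y /andP[_ yu]; rewrite (negPf yu) !addn0.
by case: eqP => // <-; rewrite m_xx.
Qed.

Lemma deg_contract_merged (x : V') :
  val x = u -> deg mc x + 2 = deg m u + deg m v.
Proof.
move=> xu; rewrite deg_contract /deg xu eqxx.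
rewrite [X in _ = X + _](bigD1 v) //= [X in _ = _ + X](bigD1 v) //=.
rewrite m_uv m_xx add0n (bigD1 u) //=.
rewrite [X in _ = _ + X + _](bigD1 u) //= [X in _ = _ + X](bigD1 u) //=.
rewrite eqxx !m_xx (m_sym v u) m_uv.
rewrite (eq_bigr (fun y => m u y + m v y)); last first.
  by move=> y /andP[_ yu]; rewrite (negPf yu) eq_sym (negPf yu) addn0.
rewrite big_split /=; lia.
Qed.

Definition merged_vertex : V' := exist _ u u_neq_v.

Definition merge (x : T) : V' := odflt merged_vertex (insub x).

Lemma val_merge x : val (merge x) = if x == v then u else x.
Proof.
rewrite /merge; case: insubP => [y xv vy|]; first by rewrite /= vy (negPf xv).
by rewrite negbK => /eqP ->; rewrite eqxx.
Qed.

Lemma merge_val (x : V') : merge (val x) = x.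
Proof. by apply: val_inj; rewrite val_merge (negPf (valP x)). Qed.

Lemma leq_contract_merge x y :
  merge x != merge y -> m x y <= mc (merge x) (merge y).
Proof.
rewrite -(inj_eq val_inj) => neq_xy; rewrite /contract (negPf neq_xy).
move: neq_xy; rewrite !val_merge.
by case: (eqVneq x v) => [->|xv]; case: (eqVneq y v) => [->|yv] //=;
  rewrite ?eqxx => uxy; lia.
Qed.

Lemma adjacent_merge x y :
  merge x != merge y -> adjacent m x y -> adjacent mc (merge x) (merge y).
Proof. by move=> /leq_contract_merge le_m /leq_trans; apply. Qed.

Lemma adjacent_contract_lift (x y : V') : val x != u ->
  adjacent mc x y -> exists2 z, merge z = y & adjacent m (val x) z.
Proof.
move=> xu; rewrite /adjacent /contract (negPf xu) addn0.
case: eqP => //= xy; case: (eqVneq (val y) u) => [yu|yu].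
  rewrite yu addn_gt0 => /orP[xu_pos|xv_pos].
  - by exists u; rewrite // -yu merge_val.
  - by exists v => //; apply: val_inj; rewrite val_merge eqxx yu.
by rewrite addn0 => xy_pos; exists (val y); rewrite ?merge_val.
Qed.

Lemma co_even_dominating_merge (D : {set T}) :
  co_even_dominating m D -> co_even_dominating mc (merge @: D).
Proof.
move=> /forallP coeD; apply/forallP => x; apply/implyP => xD.
have notin_D z : merge z = x -> z \notin D.
  by move=> zx; apply: contra xD => zD; rewrite -zx imset_f.
have /andP[/existsP[y /andP[yD xy]] even_x] :=
  implyP (coeD (val x)) (notin_D _ (merge_val x)).
apply/andP; split.
  apply/existsP; exists (merge y); rewrite imset_f //=.
  rewrite -[x]merge_val adjacent_merge ?merge_val //.
  by apply: contraNneq xD => ->; apply: imset_f.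
have [xu|xu] := eqVneq (val x) u; last by rewrite deg_contract_other.
have vD : v \notin D by apply: notin_D; apply: val_inj; rewrite val_merge eqxx.
have /andP[_ even_v] := implyP (coeD v) vD.
rewrite xu in even_x; have := congr1 odd (deg_contract_merged xu).
by rewrite !oddD (negPf even_x) (negPf even_v) /= addbF => ->.
Qed.

Lemma co_even_dominating_lift (D' : {set V'}) :
  co_even_dominating mc D' -> co_even_dominating m (val @: D' :|: [set u; v]).
Proof.
move=> /forallP coeD'; apply/forallP => x; apply/implyP.
rewrite !inE !negb_or => /and3P[xD' xu xv].
pose x' : V' := exist _ x xv.
have x'D' : x' \notin D' by apply: contra xD' => ?; apply/imsetP; exists x'.
have /andP[/existsP[y /andP[yD' x'y]] even_x'] := implyP (coeD' x') x'D'.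
apply/andP; split; last by rewrite -(deg_contract_other (x := x')).
have [z zy xz] := adjacent_contract_lift (x := x') xu x'y.
apply/existsP; exists z; rewrite xz andbT !inE.
have [->|zv] := eqVneq z v; first by rewrite !orbT.
suff ->: z = val y by rewrite imset_f.
by rewrite -zy val_merge (negPf zv).
Qed.

End Contraction.

Theorem mainTheorem6 (T : finType) (m : T -> T -> nat)
  (hG : loopless_multigraph m) (u v : T) (he : m u v = 1) :
  gamma_coe m <= gamma_coe (contract m u v) + 2 /\
  gamma_coe (contract m u v) <= gamma_coe m.
Proof.
split.
- have [D' coeD' <-] := gamma_coe_attained (contract m u v).
  apply: leq_trans (gamma_coe_le (co_even_dominating_lift hG he coeD')) _.
  apply: leq_trans (leq_card_setU _ _) _.
  by apply: leq_add; [exact: leq_imset_card | rewrite cards2; case: (u != v)].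
- have [D coeD <-] := gamma_coe_attained m.
  apply: leq_trans (gamma_coe_le (co_even_dominating_merge hG he coeD)) _.
  exact: leq_imset_card.
Qed.
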